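(* Let $n\ge 1$, let $a_1,\dots,a_n>0$ and $p_1,\dots,p_n>0$ be real numbers, and let $0<r\leq s$. Define $$M_r(a,p)=\left(\frac{\sum_{i=1}^n p_i a_i^r}{\sum_{i=1}^n p_i}\right)^{1/r},\qquad M_s(a,p)=\left(\frac{\sum_{i=1}^n p_i a_i^s}{\sum_{i=1}^n p_i}\right)^{1/s},$$ $$A=\frac{r(s-r)}{2s^2}[M_s(a,p)]^r\cdot\frac{\sum_{i=1}^n p_i\left(\frac{a_i^s}{[M_s(a,p)]^s}-1\right)^2}{\sum_{i=1}^n p_i},$$ $$m=\min\left\{1,\ \frac{a_1^s}{[M_s(a,p)]^s},\dots,\frac{a_n^s}{[M_s(a,p)]^s}\right\},\qquad M=\max\left\{1,\ \frac{a_1^s}{[M_s(a,p)]^s},\dots,\frac{a_n^s}{[M_s(a,p)]^s}\right\}.$$ Then $$\frac{A}{M}\leq[M_s(a,p)]^r-[M_r(a,p)]^r\leq\frac{A}{m}.$$ *)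

From Stdlib Require Export Reals.
Open Scope R_scope.

(* sumR n f = f 0 + ... + f (n-1)  (indices 0..n-1 stand for 1..n) *)
Fixpoint sumR (n : nat) (f : nat -> R) : R :=
  match n with
  | O => 0
  | S k => sumR k f + f k
  end.

Fixpoint minR1 (n : nat) (f : nat -> R) : R :=
  match n with
  | O => 1
  | S k => Rmin (minR1 k f) (f k)
  end.

Fixpoint maxR1 (n : nat) (f : nat -> R) : R :=
  match n with
  | O => 1
  | S k => Rmax (maxR1 k f) (f k)
  end.

Definition powMean (n : nat) (a p : nat -> R) (r : R) : R :=
  Rpower (sumR n (fun i => p i * Rpower (a i) r) / sumR n p) (1 / r).

Definition A_const (n : nat) (a p : nat -> R) (r s : R) : R :=
  r * (s - r) / (2 * s ^ 2) * Rpower (powMean n a p s) r *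
  (sumR n (fun i => p i * (Rpower (a i) s / Rpower (powMean n a p s) s - 1) ^ 2)
   / sumR n p).

Definition m_const (n : nat) (a p : nat -> R) (s : R) : R :=
  minR1 n (fun i => Rpower (a i) s / Rpower (powMean n a p s) s).

Definition M_const (n : nat) (a p : nat -> R) (s : R) : R :=
  maxR1 n (fun i => Rpower (a i) s / Rpower (powMean n a p s) s).

(* Put t = r/s in (0,1] and x_i = a_i^s / M_s^s, so that the x_i have weighted
   mean 1.  Then M_s^r - M_r^r = M_s^r * mean(g(x_i)), where
     g(x) = 1 + t (x - 1) - x^t
   is the gap in Bernoulli's inequality x^t <= 1 + t (x - 1).  The heart of the
   proof is the scalar estimate, with c = t (1-t) / 2,
     c (x-1)^2 / max(1,x) <= g(x) <= c (x-1)^2 / min(1,x),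
   obtained from two auxiliary functions that vanish to second order at 1 and
   whose second derivatives change sign at 1 (a convexity/tangent argument).
   The file proves: the calculus tool (tangent lemmas), the scalar estimate,
   basic facts on the finite sums [sumR], [minR1], [maxR1], the averaged
   estimate, the normalization of the power means, and finally the theorem by
   multiplying the averaged estimate by M_s^r. *)

From Stdlib Require Import Reals Lra Lia.
From Coquelicot Require Import Coquelicot.
Open Scope R_scope.

Definition bernoulli_gap (t x : R) : R := 1 + t * (x - 1) - Rpower x t.

Lemma Rpower_base_1 t : Rpower 1 t = 1.
Proof. unfold Rpower; rewrite ln_1, Rmult_0_r; apply exp_0. Qed.

Lemma exp_le_exp a b : a <= b -> exp a <= exp b.
Proof.
  intros Hab; destruct (Req_dec a b) as [-> | Hne]; [lra |].
  left; apply exp_increasing; lra.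
Qed.

Lemma Rpower_between t y : 0 <= t <= 1 -> 0 < y ->
  (y <= 1 -> y <= Rpower y t) /\ (1 <= y -> Rpower y t <= y).
Proof.
  intros Ht Hy; split; intros Hy1.
  - assert (ln y <= 0) by (rewrite <- ln_1; apply ln_le; lra).
    rewrite <- (exp_ln y) at 1 by exact Hy; unfold Rpower.
    apply exp_le_exp; nra.
  - assert (0 <= ln y) by (rewrite <- ln_1; apply ln_le; lra).
    rewrite <- (exp_ln y) at 2 by exact Hy; unfold Rpower.
    apply exp_le_exp; nra.
Qed.

Lemma nondecreasing_of_derive (f df : R -> R) a b : a <= b ->
  (forall y, a <= y <= b -> is_derive f y (df y)) ->
  (forall y, a <= y <= b -> 0 <= df y) -> f a <= f b.
Proof.
  intros Hab Hd Hpos; destruct (Req_dec a b) as [-> | Hne]; [lra |].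
  destruct (MVT_gen f a b df) as [z [Hz Heq]].
  - intros y Hy; apply Hd; rewrite Rmin_left, Rmax_right in Hy; lra.
  - intros y Hy; rewrite Rmin_left, Rmax_right in Hy by lra.
    apply continuity_pt_filterlim, (ex_derive_continuous f y).
    eexists; apply Hd; lra.
  - rewrite Rmin_left, Rmax_right in Hz by lra.
    assert (0 <= df z) by (apply Hpos; lra); nra.
Qed.

Lemma tangent_at_one_nonneg (F DF D2F : R -> R) x : 0 < x ->
  F 1 = 0 -> DF 1 = 0 ->
  (forall y, 0 < y -> is_derive F y (DF y)) ->
  (forall y, 0 < y -> is_derive DF y (D2F y)) ->
  (forall y, Rmin x 1 <= y <= Rmax x 1 -> 0 <= D2F y) -> 0 <= F x.
Proof.
  intros Hx HF1 HDF1 HF HDF HD2F.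
  destruct (Rle_lt_dec x 1) as [Hx1 | Hx1].
  - rewrite Rmin_left, Rmax_right in HD2F by lra.
    assert (HDF_neg : forall y, x <= y <= 1 -> DF y <= 0).
    { intros y Hy; rewrite <- HDF1.
      apply (nondecreasing_of_derive DF D2F); [lra | |];
        intros z Hz; [apply HDF | apply HD2F]; lra. }
    assert (- F x <= - F 1).
    { apply (nondecreasing_of_derive (fun y => - F y) (fun y => - DF y)); [lra | |].
      - intros y Hy; apply (is_derive_opp F), HF; lra.
      - intros y Hy; specialize (HDF_neg y Hy); lra. }
    lra.
  - rewrite Rmin_right, Rmax_left in HD2F by lra.
    assert (HDF_pos : forall y, 1 <= y <= x -> 0 <= DF y).
    { intros y Hy; rewrite <- HDF1.
      apply (nondecreasing_of_derive DF D2F); [lra | |];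
        intros z Hz; [apply HDF | apply HD2F]; lra. }
    rewrite <- HF1; apply (nondecreasing_of_derive F DF); [lra | | exact HDF_pos].
    intros y Hy; apply HF; lra.
Qed.

Lemma tangent_at_one_nonpos (F DF D2F : R -> R) x : 0 < x ->
  F 1 = 0 -> DF 1 = 0 ->
  (forall y, 0 < y -> is_derive F y (DF y)) ->
  (forall y, 0 < y -> is_derive DF y (D2F y)) ->
  (forall y, Rmin x 1 <= y <= Rmax x 1 -> D2F y <= 0) -> F x <= 0.
Proof.
  intros Hx HF1 HDF1 HF HDF HD2F.
  enough (0 <= - F x) by lra.
  apply (tangent_at_one_nonneg (fun y => - F y) (fun y => - DF y) (fun y => - D2F y));
    [exact Hx | rewrite HF1; ring | rewrite HDF1; ring | | |].
  - intros y Hy; apply (is_derive_opp F), HF, Hy.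
  - intros y Hy; apply (is_derive_opp DF), HDF, Hy.
  - intros y Hy; specialize (HD2F y Hy); lra.
Qed.

Lemma bernoulli_gap_at_one t : bernoulli_gap t 1 = 0.
Proof. unfold bernoulli_gap; rewrite Rpower_base_1; ring. Qed.

Section BernoulliGapBounds.

Variable t : R.
Hypothesis Ht : 0 <= t <= 1.

Let c := t * (1 - t) / 2.

(* [chi] compares the gap with the quadratic [c (y-1)^2]; its second derivative
   [t (1-t) (1 - y^t / y^2)] changes sign at [y = 1]. *)
Let chi y := c * (y - 1) ^ 2 - bernoulli_gap t y.
Let dchi y := 2 * c * (y - 1) - t + t * Rpower y t / y.
Let d2chi y := t * (1 - t) * (1 - Rpower y t / (y * y)).

Let psi y := c * (y - 1) ^ 2 - y * bernoulli_gap t y.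
Let dpsi y := 2 * c * (y - 1) - 1 - t * (2 * y - 1) + (1 + t) * Rpower y t.
Let d2psi y := t * (1 + t) * (Rpower y t / y - 1).

Lemma chi_derive y : 0 < y -> is_derive chi y (dchi y).
Proof. intros Hy; unfold chi, dchi, bernoulli_gap, Rpower; auto_derive; [lra | field; lra]. Qed.

Lemma dchi_derive y : 0 < y -> is_derive dchi y (d2chi y).
Proof. intros Hy; unfold dchi, d2chi, c, Rpower; auto_derive; [lra | field; lra]. Qed.

Lemma psi_derive y : 0 < y -> is_derive psi y (dpsi y).
Proof. intros Hy; unfold psi, dpsi, bernoulli_gap, Rpower; auto_derive; [lra | field; lra]. Qed.

Lemma dpsi_derive y : 0 < y -> is_derive dpsi y (d2psi y).
Proof. intros Hy; unfold dpsi, d2psi, c, Rpower; auto_derive; [lra | field; lra]. Qed.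

Lemma d2chi_sign y : 0 < y -> (y <= 1 -> d2chi y <= 0) /\ (1 <= y -> 0 <= d2chi y).
Proof.
  intros Hy; destruct (Rpower_between t y Ht Hy) as [Hsmall Hlarge].
  assert (Hc : 0 <= t * (1 - t)) by nra.
  unfold d2chi; split; intros Hy1.
  - assert (1 <= Rpower y t / (y * y)).
    { apply Rle_div_r; [nra |]. specialize (Hsmall Hy1).
      assert (y * y <= y) by (apply Rmult_le_compat_l with (r := y) in Hy1; lra); lra. }
    nra.
  - assert (Rpower y t / (y * y) <= 1).
    { apply (Rdiv_le_1 _ (y * y)); [nra |]. specialize (Hlarge Hy1).
      assert (y <= y * y) by (apply Rmult_le_compat_l with (r := y) in Hy1; lra); lra. }
    nra.
Qed.

Lemma d2psi_sign y : 0 < y -> (y <= 1 -> 0 <= d2psi y) /\ (1 <= y -> d2psi y <= 0).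
Proof.
  intros Hy; destruct (Rpower_between t y Ht Hy) as [Hsmall Hlarge].
  assert (Hc : 0 <= t * (1 + t)) by nra.
  unfold d2psi; split; intros Hy1.
  - assert (1 <= Rpower y t / y) by (apply Rle_div_r; [lra | specialize (Hsmall Hy1); lra]).
    nra.
  - assert (Rpower y t / y <= 1) by (apply (Rdiv_le_1 _ y); [lra | specialize (Hlarge Hy1); lra]).
    nra.
Qed.

Lemma chi_at_one : chi 1 = 0 /\ dchi 1 = 0.
Proof. unfold chi, dchi; rewrite bernoulli_gap_at_one, Rpower_base_1; split; field. Qed.

Lemma psi_at_one : psi 1 = 0 /\ dpsi 1 = 0.
Proof. unfold psi, dpsi; rewrite bernoulli_gap_at_one, Rpower_base_1; split; ring. Qed.

Lemma chi_sign x : 0 < x -> (x <= 1 -> chi x <= 0) /\ (1 <= x -> 0 <= chi x).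
Proof.
  intros Hx; destruct chi_at_one as [H1 HD1]; split; intros Hx1.
  - apply (tangent_at_one_nonpos chi dchi d2chi x Hx H1 HD1 chi_derive dchi_derive).
    intros y Hy; rewrite Rmin_left, Rmax_right in Hy by lra.
    apply d2chi_sign; lra.
  - apply (tangent_at_one_nonneg chi dchi d2chi x Hx H1 HD1 chi_derive dchi_derive).
    intros y Hy; rewrite Rmin_right, Rmax_left in Hy by lra.
    apply d2chi_sign; lra.
Qed.

Lemma psi_sign x : 0 < x -> (x <= 1 -> 0 <= psi x) /\ (1 <= x -> psi x <= 0).
Proof.
  intros Hx; destruct psi_at_one as [H1 HD1]; split; intros Hx1.
  - apply (tangent_at_one_nonneg psi dpsi d2psi x Hx H1 HD1 psi_derive dpsi_derive).
    intros y Hy; rewrite Rmin_left, Rmax_right in Hy by lra.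
    apply d2psi_sign; lra.
  - apply (tangent_at_one_nonpos psi dpsi d2psi x Hx H1 HD1 psi_derive dpsi_derive).
    intros y Hy; rewrite Rmin_right, Rmax_left in Hy by lra.
    apply d2psi_sign; lra.
Qed.

Lemma bernoulli_gap_bounds x : 0 < x ->
  c * (x - 1) ^ 2 / Rmax 1 x <= bernoulli_gap t x <= c * (x - 1) ^ 2 / Rmin 1 x.
Proof.
  intros Hx; destruct (chi_sign x Hx) as [Hchi_small Hchi_large].
  destruct (psi_sign x Hx) as [Hpsi_small Hpsi_large].
  unfold chi, psi in *.
  destruct (Rle_lt_dec x 1) as [Hx1 | Hx1].
  - rewrite Rmax_left, Rmin_right by lra; split.
    + rewrite Rdiv_1_r; specialize (Hchi_small Hx1); lra.
    + apply Rle_div_r; [lra |]; specialize (Hpsi_small Hx1); lra.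
  - rewrite Rmax_right, Rmin_left by lra; split.
    + apply Rle_div_l; [lra |]; specialize (Hpsi_large ltac:(lra)); lra.
    + rewrite Rdiv_1_r; specialize (Hchi_large ltac:(lra)); lra.
Qed.

End BernoulliGapBounds.

Lemma sumR_pos n f : (1 <= n)%nat -> (forall i, (i < n)%nat -> 0 < f i) -> 0 < sumR n f.
Proof.
  induction n as [| k IH]; intros Hn Hf; [lia |]; simpl.
  pose proof (Hf k ltac:(lia)) as Hk.
  destruct k as [| k]; [simpl; lra |].
  assert (0 < sumR (S k) f) by (apply IH; [lia | intros; apply Hf; lia]).
  lra.
Qed.

Lemma sumR_le n f g : (forall i, (i < n)%nat -> f i <= g i) -> sumR n f <= sumR n g.
Proof.
  induction n as [| k IH]; intros H; simpl; [lra |].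
  assert (sumR k f <= sumR k g) by (apply IH; intros; apply H; lia).
  specialize (H k ltac:(lia)); lra.
Qed.

Lemma sumR_ext n f g : (forall i, (i < n)%nat -> f i = g i) -> sumR n f = sumR n g.
Proof.
  induction n as [| k IH]; intros H; simpl; [reflexivity |].
  rewrite IH by (intros; apply H; lia).
  rewrite H by lia; reflexivity.
Qed.

Lemma sumR_scal n k f : sumR n (fun i => k * f i) = k * sumR n f.
Proof. induction n as [| j IH]; simpl; [ring | rewrite IH; ring]. Qed.

Lemma sumR_bernoulli_gap n p x t :
  sumR n (fun i => p i * bernoulli_gap t (x i)) =
  sumR n p + t * (sumR n (fun i => p i * x i) - sumR n p)
  - sumR n (fun i => p i * Rpower (x i) t).
Proof. unfold bernoulli_gap; induction n as [| j IH]; simpl; [ring | rewrite IH; ring]. Qed.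

Lemma minR1_le1 n f : minR1 n f <= 1.
Proof. induction n; simpl; [lra | pose proof (Rmin_l (minR1 n f) (f n)); lra]. Qed.

Lemma minR1_le n f i : (i < n)%nat -> minR1 n f <= f i.
Proof.
  induction n as [| k IH]; intros Hi; [lia |]; simpl.
  destruct (Nat.eq_dec i k) as [-> | Hne]; [apply Rmin_r |].
  pose proof (Rmin_l (minR1 k f) (f k)); pose proof (IH ltac:(lia)); lra.
Qed.

Lemma minR1_pos n f : (forall i, (i < n)%nat -> 0 < f i) -> 0 < minR1 n f.
Proof.
  induction n as [| k IH]; intros H; simpl; [lra |].
  apply Rmin_glb_lt; [apply IH; intros |]; apply H; lia.
Qed.

Lemma maxR1_ge1 n f : 1 <= maxR1 n f.
Proof. induction n; simpl; [lra | pose proof (Rmax_l (maxR1 n f) (f n)); lra]. Qed.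

Lemma maxR1_ge n f i : (i < n)%nat -> f i <= maxR1 n f.
Proof.
  induction n as [| k IH]; intros Hi; [lia |]; simpl.
  destruct (Nat.eq_dec i k) as [-> | Hne]; [apply Rmax_r |].
  pose proof (Rmax_l (maxR1 k f) (f k)); pose proof (IH ltac:(lia)); lra.
Qed.

Lemma bernoulli_gap_bounds_weak t x m M : 0 <= t <= 1 -> 0 < m ->
  m <= Rmin 1 x -> Rmax 1 x <= M ->
  t * (1 - t) / 2 * (x - 1) ^ 2 / M <= bernoulli_gap t x
  <= t * (1 - t) / 2 * (x - 1) ^ 2 / m.
Proof.
  intros Ht Hm HmX HMX.
  pose proof (Rmin_l 1 x); pose proof (Rmin_r 1 x); pose proof (Rmax_l 1 x).
  destruct (bernoulli_gap_bounds t Ht x ltac:(lra)) as [Hlow Hup].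
  assert (HK : 0 <= t * (1 - t) / 2 * (x - 1) ^ 2)
    by (apply Rmult_le_pos; [nra | apply pow2_ge_0]).
  split.
  - apply Rle_trans with (2 := Hlow), Rmult_le_compat_l; [exact HK |].
    apply Rinv_le_contravar; lra.
  - apply Rle_trans with (1 := Hup), Rmult_le_compat_l; [exact HK |].
    apply Rinv_le_contravar; lra.
Qed.

Lemma weighted_bernoulli_gap_bounds n p x t : (1 <= n)%nat ->
  (forall i, (i < n)%nat -> 0 < p i) -> (forall i, (i < n)%nat -> 0 < x i) ->
  sumR n (fun i => p i * x i) = sumR n p -> 0 <= t <= 1 ->
  t * (1 - t) / 2 * (sumR n (fun i => p i * (x i - 1) ^ 2) / sumR n p) / maxR1 n x
    <= 1 - sumR n (fun i => p i * Rpower (x i) t) / sumR n p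
  /\ 1 - sumR n (fun i => p i * Rpower (x i) t) / sumR n p
    <= t * (1 - t) / 2 * (sumR n (fun i => p i * (x i - 1) ^ 2) / sumR n p) / minR1 n x.
Proof.
  intros Hn Hp Hx Hmean Ht.
  assert (HP : 0 < sumR n p) by (apply sumR_pos; assumption).
  assert (Hm : 0 < minR1 n x) by (apply minR1_pos; assumption).
  pose proof (maxR1_ge1 n x) as HM.
  assert (Hdeficit : 1 - sumR n (fun i => p i * Rpower (x i) t) / sumR n p
                     = sumR n (fun i => p i * bernoulli_gap t (x i)) / sumR n p).
  { rewrite sumR_bernoulli_gap, Hmean; field; lra. }
  assert (Hquad : forall K, 0 < K ->
    t * (1 - t) / 2 * (sumR n (fun i => p i * (x i - 1) ^ 2) / sumR n p) / K
    = sumR n (fun i => p i * (t * (1 - t) / 2 * (x i - 1) ^ 2 / K)) / sumR n p).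
  { intros K HK.
    rewrite (sumR_ext n (fun i => p i * (t * (1 - t) / 2 * (x i - 1) ^ 2 / K))
               (fun i => t * (1 - t) / 2 / K * (p i * (x i - 1) ^ 2)))
      by (intros; field; lra).
    rewrite sumR_scal; field; lra. }
  assert (Hterm : forall i, (i < n)%nat ->
    t * (1 - t) / 2 * (x i - 1) ^ 2 / maxR1 n x <= bernoulli_gap t (x i)
    <= t * (1 - t) / 2 * (x i - 1) ^ 2 / minR1 n x).
  { intros i Hi; apply bernoulli_gap_bounds_weak; [exact Ht | exact Hm | |].
    - apply Rmin_glb; [apply minR1_le1 | apply minR1_le, Hi].
    - apply Rmax_lub; [apply maxR1_ge1 | apply maxR1_ge, Hi]. }
  assert (HinvP : 0 <= / sumR n p) by (left; apply Rinv_0_lt_compat, HP).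
  rewrite Hdeficit, !Hquad by lra.
  split; apply Rmult_le_compat_r; try exact HinvP;
    apply sumR_le; intros i Hi; apply Rmult_le_compat_l;
    try (left; apply Hp, Hi); apply Hterm, Hi.
Qed.

Lemma weighted_mean_pos n p f : (1 <= n)%nat ->
  (forall i, (i < n)%nat -> 0 < p i) -> (forall i, (i < n)%nat -> 0 < f i) ->
  0 < sumR n (fun i => p i * f i) / sumR n p.
Proof.
  intros Hn Hp Hf; apply Rdiv_lt_0_compat; apply sumR_pos; try assumption.
  intros i Hi; apply Rmult_lt_0_compat; [apply Hp | apply Hf]; exact Hi.
Qed.

Lemma Rpower_powMean n a p s q : s <> 0 ->
  Rpower (powMean n a p s) q
  = Rpower (sumR n (fun i => p i * Rpower (a i) s) / sumR n p) (q / s).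
Proof. intros Hs; unfold powMean; rewrite Rpower_mult; f_equal; field; exact Hs. Qed.

Lemma powMean_pow_self n a p s : (1 <= n)%nat ->
  (forall i, (i < n)%nat -> 0 < p i) -> s <> 0 ->
  Rpower (powMean n a p s) s = sumR n (fun i => p i * Rpower (a i) s) / sumR n p.
Proof.
  intros Hn Hp Hs; rewrite Rpower_powMean by exact Hs.
  replace (s / s) with 1 by (field; exact Hs).
  apply Rpower_1, weighted_mean_pos; try assumption.
  intros; apply exp_pos.
Qed.

Section Normalization.

Variables (n : nat) (a p : nat -> R) (s : R).
Hypotheses (hn : (1 <= n)%nat) (hp : forall i, (i < n)%nat -> 0 < p i) (hs : 0 < s).

Definition normalized_powers (i : nat) : R :=
  Rpower (a i) s / Rpower (powMean n a p s) s.

Lemma powMean_self_pos : 0 < Rpower (powMean n a p s) s.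
Proof.
  rewrite powMean_pow_self by (auto; lra).
  apply weighted_mean_pos; [exact hn | exact hp | intros; apply exp_pos].
Qed.

Lemma normalized_powers_pos i : 0 < normalized_powers i.
Proof. apply Rdiv_lt_0_compat; [apply exp_pos | apply powMean_self_pos]. Qed.

Lemma normalized_powers_mean :
  sumR n (fun i => p i * normalized_powers i) = sumR n p.
Proof.
  pose proof powMean_self_pos as HS.
  assert (HP : 0 < sumR n p) by (apply sumR_pos; assumption).
  unfold normalized_powers.
  rewrite (sumR_ext n (fun i => p i * (Rpower (a i) s / Rpower (powMean n a p s) s))
             (fun i => / Rpower (powMean n a p s) s * (p i * Rpower (a i) s)))
    by (intros; field; lra).
  rewrite sumR_scal, powMean_pow_self by (auto; lra).
  field; split; [lra |].
  apply Rgt_not_eq, sumR_pos; [exact hn |].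
  intros i Hi; apply Rmult_lt_0_compat; [apply hp, Hi | apply exp_pos].
Qed.

Lemma powMean_pow_normalized r : 0 < r ->
  Rpower (powMean n a p r) r
  = Rpower (powMean n a p s) r
    * (sumR n (fun i => p i * Rpower (normalized_powers i) (r / s)) / sumR n p).
Proof.
  intros hr; pose proof powMean_self_pos as HS.
  assert (HP : 0 < sumR n p) by (apply sumR_pos; assumption).
  assert (Hpow : forall i, Rpower (a i) r
    = Rpower (powMean n a p s) r * Rpower (normalized_powers i) (r / s)).
  { intros i.
    replace (Rpower (powMean n a p s) r) with (Rpower (Rpower (powMean n a p s) s) (r / s))
      by (rewrite Rpower_mult; f_equal; field; lra).
    rewrite Rpower_mult_distr by (apply HS || apply normalized_powers_pos).
    unfold normalized_powers.
    replace (Rpower (powMean n a p s) s * (Rpower (a i) s / Rpower (powMean n a p s) s))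
      with (Rpower (a i) s) by (field; lra).
    rewrite Rpower_mult; f_equal; field; lra. }
  rewrite powMean_pow_self by (auto; lra).
  rewrite (sumR_ext n (fun i => p i * Rpower (a i) r)
             (fun i => Rpower (powMean n a p s) r
                       * (p i * Rpower (normalized_powers i) (r / s))))
    by (intros i _; rewrite Hpow; ring).
  rewrite sumR_scal; field; lra.
Qed.

End Normalization.

(* With [t = r/s] and [x = normalized_powers], the difference [M_s^r - M_r^r]
   is [M_s^r (1 - mean(x^t))] and [A = c M_s^r Var(x)]; the claim is thus
   [weighted_bernoulli_gap_bounds] multiplied by [M_s^r > 0]. *)
Theorem mainTheorem2 (n : nat) (a p : nat -> R) (r s : R)
  (hn : (1 <= n)%nat)
  (ha : forall i, (i < n)%nat -> 0 < a i)
  (hp : forall i, (i < n)%nat -> 0 < p i)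
  (hr : 0 < r) (hrs : r <= s) :
  A_const n a p r s / M_const n a p s
    <= Rpower (powMean n a p s) r - Rpower (powMean n a p r) r
  /\ Rpower (powMean n a p s) r - Rpower (powMean n a p r) r
    <= A_const n a p r s / m_const n a p s.
Proof.
  set (t := r / s).
  assert (Ht : 0 <= t <= 1).
  { split; [apply Rlt_le, Rdiv_lt_0_compat | apply (Rdiv_le_1 _ s)]; lra. }
  assert (Hx : forall i, 0 < normalized_powers n a p s i)
    by (intros; apply normalized_powers_pos; auto; lra).
  destruct (weighted_bernoulli_gap_bounds n p (normalized_powers n a p s) t hn hp)
    as [Hlow Hup]; [intros; apply Hx | apply normalized_powers_mean; auto; lra | exact Ht |].
  assert (HE : 0 < Rpower (powMean n a p s) r) by apply exp_pos.
  assert (HP : 0 < sumR n p) by (apply sumR_pos; assumption).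
  assert (Hm : 0 < minR1 n (normalized_powers n a p s)) by (apply minR1_pos; intros; apply Hx).
  pose proof (maxR1_ge1 n (normalized_powers n a p s)) as HM.
  apply (Rmult_le_compat_l (Rpower (powMean n a p s) r)) in Hlow, Hup; try lra.
  unfold A_const, M_const, m_const.
  rewrite (powMean_pow_normalized n a p s hn hp ltac:(lra) r hr); fold t.
  replace (r * (s - r) / (2 * s ^ 2)) with (t * (1 - t) / 2) by (unfold t; field; lra).
  split.
  - eapply Rle_trans; [apply Req_le | eapply Rle_trans; [exact Hlow | apply Req_le]];
      unfold normalized_powers in *; field; lra.
  - eapply Rle_trans; [apply Req_le | eapply Rle_trans; [exact Hup | apply Req_le]];
      unfold normalized_powers in *; field; lra.
Qed.
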